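(* Let $\Lambda:\mathbb{R}\to[0,1]$ be a decreasing function. Then for every $X\in L^0$, $$\mathrm{VaR}_{\Lambda}(X)=\sup_{x\in\mathbb{R}}\left(\mathrm{VaR}_{\Lambda(x)}(X)\wedge x\right)=\inf_{x\in\mathbb{R}}\left(\mathrm{VaR}_{\Lambda(x)}(X)\vee x\right),$$ and $$\mathrm{VaR}^+_{\Lambda}(X)=\sup_{x\in\mathbb{R}}\left(\mathrm{VaR}^+_{\Lambda(x)}(X)\wedge x\right)=\inf_{x\in\mathbb{R}}\left(\mathrm{VaR}^+_{\Lambda(x)}(X)\vee x\right).$$
   Context: $(\Omega,\mathcal F,\mathbb P)$ is an atomless probability space and $L^0$ is the set of all random variables on it. ''Decreasing'' means weakly decreasing. $x\wedge y=\min\{x,y\}$, $x\vee y=\max\{x,y\}$. For $\alpha\in[0,1]$ and $X\in L^0$: $\mathrm{VaR}_\alpha(X)=\inf\{x\in\mathbb{R}:\mathbb P(X\le x)\ge\alpha\}$ and $\mathrm{VaR}^+_\alpha(X)=\inf\{x\in\mathbb{R}:\mathbb P(X\le x)>\alpha\}$ (with $\inf\mathbb{R}=-\infty$, $\inf\emptyset=\infty$; so $\mathrm{VaR}_0=-\infty$, $\mathrm{VaR}^+_1=\infty$). For a decreasing $\Lambda:\mathbb{R}\to[0,1]$ and $X\in L^0$: $\mathrm{VaR}_\Lambda(X)=\inf\{x\in\mathbb{R}:\mathbb P(X\le x)\ge\Lambda(x)\}$ and $\mathrm{VaR}^+_\Lambda(X)=\inf\{x\in\mathbb{R}:\mathbb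 P(X\le x)>\Lambda(x)\}$. *)

From HB Require Import structures.
From mathcomp Require Import all_boot all_order all_algebra.
From mathcomp Require Import all_classical all_reals all_analysis.
Set Implicit Arguments. Unset Strict Implicit. Unset Printing Implicit Defensive.
Import Order.TTheory GRing.Theory Num.Theory.
Local Open Scope classical_set_scope.
Local Open Scope ring_scope.
Local Open Scope ereal_scope.

Section VaRDefs.
Context {d : measure_display} {T : measurableType d} {R : realType}.

Definition atomless (P : probability T R) : Prop :=
  forall A : set T, measurable A -> 0 < P A ->
    exists B : set T, [/\ measurable B, B `<=` A, 0 < P B & P B < P A].

Definition cdf (P : probability T R) (X : T -> R) (x : R) : \bar R :=
  P [set w | (X w <= x)%R].

(* VaR_alpha(X) = inf {x in R : P(X <= x) >= alpha}, in extended reals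
   (inf of R = -oo, inf of empty = +oo) *)
Definition VaR (P : probability T R) (a : R) (X : T -> R) : \bar R :=
  ereal_inf [set x%:E | x in [set x : R | a%:E <= cdf P X x]].

Definition VaRp (P : probability T R) (a : R) (X : T -> R) : \bar R :=
  ereal_inf [set x%:E | x in [set x : R | a%:E < cdf P X x]].

Definition VaRL (P : probability T R) (L : R -> R) (X : T -> R) : \bar R :=
  ereal_inf [set x%:E | x in [set x : R | (L x)%:E <= cdf P X x]].

Definition VaRLp (P : probability T R) (L : R -> R) (X : T -> R) : \bar R :=
  ereal_inf [set x%:E | x in [set x : R | (L x)%:E < cdf P X x]].

End VaRDefs.

From Pilot Require Import Defs.
From HB Require Import structures.
From mathcomp Require Import all_boot all_order all_algebra.
From mathcomp Require Import all_classical all_reals all_analysis.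
Import Order.TTheory GRing.Theory Num.Theory.
Local Open Scope classical_set_scope.
Local Open Scope ring_scope.
Local Open Scope ereal_scope.

(* Write [A x] for the set of levels [y] with [Lambda x <= P(X <= y)] (resp. [<]),
   so that [VaR_(Lambda x) X = inf (A x)] and [VaR_Lambda X = inf {y | y \in A y}].
   Each [A x] is an up-set because the cdf is nondecreasing, and [A x] grows
   with [x] because [Lambda] is decreasing.  Below
   [m := inf {y | y \in A y}] a level [r] is not in [A r], hence [A r] lies
   above [r] and [min (inf (A r)) r = r]; this bounds the sup from below and,
   by monotonicity of [A], the inf from below.  Conversely, for [a \in A a]
   either [a <= x], so [a \in A x], or [x < a]: both give
   [min (inf (A x)) x <= a], and [max (inf (A a)) a = a]. *)

Lemma lee_from_below {R : realFieldType} (x y : \bar R) :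
  (forall r : R, r%:E < x -> r%:E <= y) -> x <= y.
Proof.
case: x => [r | | ] xy; last by rewrite leNye.
- by apply/lee_subgt0Pr => e e0; apply: xy; rewrite lte_fin ltrBlDr ltrDl.
- by rewrite (@eq_infty _ y) // => r; apply: xy; rewrite ltry.
Qed.

Section diagonal_infimum.
Context {R : realType} (A : R -> set R).
Hypothesis A_upper : forall {x y z}, A x y -> (y <= z)%R -> A x z.
Hypothesis A_mono : forall {x x'}, (x <= x')%R -> A x `<=` A x'.

Let v x := ereal_inf [set y%:E | y in A x].
Let m := ereal_inf [set y%:E | y in [set y | A y y]].

Lemma notA_diag_lt {x y} : ~ A x x -> A x y -> (x < y)%R.
Proof.
move=> nAxx Axy; rewrite ltNge; apply/negP => yx.
exact: nAxx (A_upper Axy yx).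
Qed.

Lemma diag_inf_lt_min r : r%:E < m -> mine (v r) r%:E = r%:E.
Proof.
move=> rm; have nArr : ~ A r r.
  by move=> Arr; move: rm; rewrite ltNge ereal_inf_lbound //; exists r.
apply/min_idPr/le_ereal_inf_tmp => _ [y Ary <-].
by rewrite lee_fin ltW // (notA_diag_lt nArr Ary).
Qed.

Lemma diag_inf_sup_min : m = ereal_sup [set mine (v x) x%:E | x in [set: R]].
Proof.
apply/eqP; rewrite eq_le; apply/andP; split.
  apply: lee_from_below => r rm; apply: ereal_sup_ubound.
  by exists r => //; rewrite diag_inf_lt_min.
apply: ge_ereal_sup => _ [x _ <-]; apply: le_ereal_inf_tmp => _ [a Aaa <-].
have [ax | xa] := leP a x; rewrite ge_min.
  by rewrite ereal_inf_lbound //; exists a => //; exact: A_mono ax _ Aaa.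
by rewrite lee_fin (ltW xa) orbT.
Qed.

Lemma diag_inf_inf_max : m = ereal_inf [set maxe (v x) x%:E | x in [set: R]].
Proof.
apply/eqP; rewrite eq_le; apply/andP; split.
  apply: le_ereal_inf_tmp => _ [x _ <-]; rewrite le_max.
  have [Axx | nAxx] := pselect (A x x).
    by apply/orP; right; apply: ereal_inf_lbound; exists x.
  apply/orP; left; apply: le_ereal_inf_tmp => _ [y Axy <-].
  apply: ereal_inf_lbound; exists y => //.
  exact: A_mono (ltW (notA_diag_lt nAxx Axy)) _ Axy.
apply: le_ereal_inf_tmp => _ [x Axx <-]; apply: ereal_inf_lbound; exists x => //.
by apply/max_idPr/ereal_inf_lbound; exists x.
Qed.

End diagonal_infimum.

Lemma le_cdf {d} {T : measurableType d} {R : realType} (P : probability T R)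
    (X : T -> R) : measurable_fun setT X ->
  {homo Defs.cdf P X : x y / (x <= y)%R >-> x <= y}.
Proof.
move=> mX x y xy.
have mlev z : measurable [set w | (X w <= z)%R].
  by rewrite -preimage_itvNyc -[X in measurable X]setTI; exact: mX.
by apply: le_measure; rewrite ?inE // => w /= /le_trans; apply.
Qed.

Theorem proposition1 (d : measure_display) (T : measurableType d) (R : realType)
  (P : probability T R) (HP : atomless P)
  (L : R -> R) (HL01 : forall x, (0 <= L x <= 1)%R)
  (HLdec : forall x y : R, (x <= y)%R -> (L y <= L x)%R)
  (X : T -> R) (HX : measurable_fun setT X) :
  (VaRL P L X = ereal_sup [set mine (VaR P (L x) X) x%:E | x in [set: R]] /\
   VaRL P L X = ereal_inf [set maxe (VaR P (L x) X) x%:E | x in [set: R]]) /\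
  (VaRLp P L X = ereal_sup [set mine (VaRp P (L x) X) x%:E | x in [set: R]] /\
   VaRLp P L X = ereal_inf [set maxe (VaRp P (L x) X) x%:E | x in [set: R]]).
Proof.
have cdf_le := le_cdf P X HX.
have L_ge x x' : (x <= x')%R -> (L x')%:E <= (L x)%:E.
  by rewrite lee_fin; exact: HLdec.
(* Unqualified [cdf] would be the library's distribution function. *)
pose A x := [set y | (L x)%:E <= Defs.cdf P X y].
have A_upper x y z : A x y -> (y <= z)%R -> A x z.
  by move=> Axy /cdf_le; exact: le_trans.
have A_mono x x' : (x <= x')%R -> A x `<=` A x'.
  by move=> /L_ge xx' y; exact: le_trans.
pose Ap x := [set y | (L x)%:E < Defs.cdf P X y].
have Ap_upper x y z : Ap x y -> (y <= z)%R -> Ap x z.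
  by move=> Axy /cdf_le; exact: lt_le_trans.
have Ap_mono x x' : (x <= x')%R -> Ap x `<=` Ap x'.
  by move=> /L_ge xx' y; exact: le_lt_trans.
split; split.
- exact: (diag_inf_sup_min A A_upper A_mono).
- exact: (diag_inf_inf_max A A_upper A_mono).
- exact: (diag_inf_sup_min Ap Ap_upper Ap_mono).
- exact: (diag_inf_inf_max Ap Ap_upper Ap_mono).
Qed.
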